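(* Let $0<\nu\le1$ and $\tilde f(\xi)=\sum_{j\ge0}(j!)^{-1/\nu}|\xi|^j$ for $\xi\in\mathbb{R}^n$. Then for $\xi,\eta\in\mathbb{R}^n$: (A.9) $\tilde f(\xi)\le\tilde f(\xi-\eta)\tilde f(\eta)$ for all $\xi,\eta$; (A.10) $\tilde f(\xi)\le\tilde f(\xi-\eta)\exp(|\eta|^\nu)$ for $|\xi|\wedge|\eta|\le|\xi-\eta|$; (A.11) $(\tilde f(\eta)-\tilde f(\xi))|\eta|^{1-\nu}\le|\xi-\eta|\tilde f(\eta)$ for $|\xi|\le|\eta|$; (A.12) $|\tilde f(\xi)-\tilde f(\eta)||\eta|^{1-\nu}\le|\xi-\eta|^{1-\nu}\tilde f(\xi-\eta)\tilde f(\eta)$ for all $\xi,\eta$; (A.13) $|\tilde f(\xi)-\tilde f(\eta)||\eta|^{1-\nu}\le|\xi-\eta|^{1-\nu}(\exp(|\xi-\eta|^\nu)-1)\tilde f(\eta)$ for $|\xi|\wedge|\xi-\eta|\le|\eta|$; (A.14) $|\tilde f(\xi)-\tilde f(\eta)||\eta|^{1-\nu}\le C|\xi-\eta|^{1-\nu}(\tilde f(\xi-\eta)-1)\exp(|\eta|^\nu)$ for $|\xi|\wedge|\eta|\le|\xi-\eta|$, where one can take $C=1$ except in the region $|\xi|\le|\xi-\eta|\le|\eta|$, where $C=2^{1-\nu}$. Moreover, the function $\xi\mapsto\tilde f(\xi)\vee\tilde f(1)$ satisfies the same estimates (A.9)–(A.14) as $\tilde f$ (with $\tilde f$ replaced by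 it throughout).
   Context: $a\vee b=\max(a,b)$, $a\wedge b=\min(a,b)$; $\tilde f(1)$ denotes the value at $|\xi|=1$. *)

From HB Require Import structures.
From mathcomp Require Import all_boot all_order all_algebra.
From mathcomp Require Import all_classical all_reals all_analysis.
Set Implicit Arguments. Unset Strict Implicit. Unset Printing Implicit Defensive.
Import Order.TTheory GRing.Theory Num.Theory numFieldNormedType.Exports.
Local Open Scope ring_scope.

Definition enorm (R : realType) (n : nat) (x : 'rV[R]_n) : R :=
  Num.sqrt (\sum_(i < n) x ord0 i ^+ 2).

Definition ftil (R : realType) (nu : R) (r : R) : R :=
  limn (series (fun j : nat => (j`!)%:R `^ (- (1 / nu)) * r ^+ j)).

Definition ftilde (R : realType) (n : nat) (nu : R) (xi : 'rV[R]_n) : R :=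
  ftil nu (enorm xi).

Definition estimates_A (R : realType) (n : nat) (nu : R)
  (F : 'rV[R]_n -> R) : Prop :=
  forall xi eta : 'rV[R]_n,
  let a := enorm xi in let b := enorm eta in let d := enorm (xi - eta) in
  (F xi <= F (xi - eta) * F eta) /\
  (Num.min a b <= d -> F xi <= F (xi - eta) * expR (b `^ nu)) /\
  (a <= b -> (F eta - F xi) * b `^ (1 - nu) <= d * F eta) /\
  (`|F xi - F eta| * b `^ (1 - nu) <= d `^ (1 - nu) * F (xi - eta) * F eta) /\
  (Num.min a d <= b ->
     `|F xi - F eta| * b `^ (1 - nu) <= d `^ (1 - nu) * (expR (d `^ nu) - 1) * F eta) /\
  (Num.min a b <= d ->
     let C := if (a <= d) && (d <= b) then 2 `^ (1 - nu) else 1 in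
     `|F xi - F eta| * b `^ (1 - nu)
       <= C * d `^ (1 - nu) * (F (xi - eta) - 1) * expR (b `^ nu)).

(* Write ftil r = sum_j c_j r^j with c_j = (j!)^(-1/nu); the (i, q) term of the binomial
   expansion of ftil (r + s) is then c_(i+q) C(i+q, i) r^q s^i.  Each estimate reduces to a
   bound on these terms, proved by comparing logarithms.  Since 1/nu >= 1 and i! q! <= (i+q)!,
   the binomial coefficient is absorbed by c_(i+q), whence ftil (r + s) <= ftil r * ftil s;
   for s <= r, convexity of expR with weights nu and 1 - nu instead bounds the term by
   (s^nu)^i / i! times a convex combination of the terms of indices q and i + q of ftil r, and
   summing (s^nu)^i / i! over i produces expR (s^nu).  The weights r^(1-nu) are handled the same
   way, for (A.11) through the derivative bound r^(1-nu) ftil'(r) <= ftil r.  The estimates on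
   R^n then follow from the triangle inequality for the Euclidean norm and the monotonicity of
   ftil, and they pass to max(ftil, ftil 1) because x |-> max(x, c) is nondecreasing and
   1-Lipschitz. *)

From HB Require Import structures.
From mathcomp Require Import all_boot all_order all_algebra.
From mathcomp Require Import all_classical all_reals all_analysis.
From mathcomp Require Import ring lra.
Import Order.TTheory GRing.Theory Num.Theory numFieldNormedType.Exports.
Set Implicit Arguments. Unset Strict Implicit. Unset Printing Implicit Defensive.
Local Open Scope ring_scope.

Lemma sum_triangle (V : nmodType) (G : nat -> nat -> V) N :
  \sum_(0 <= j < N) \sum_(0 <= i < j.+1) G i (j - i)%N =
  \sum_(0 <= i < N) \sum_(0 <= q < N - i) G i q.
Proof.
elim: N => [|N IH]; first by rewrite !big_geq.
rewrite big_nat_recr //= IH [in RHS]big_nat_recr //= subSnn big_nat1.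
rewrite [X in _ + X = _]big_nat_recr //= subnn.
under [in RHS]eq_big_nat => i /andP[_ iN] do rewrite subSn ?(ltnW iN) // big_nat_recr //=.
by rewrite big_split /= !addrA.
Qed.

Lemma fact_mul_leq i q : (i`! * q`! <= (i + q)`!)%N.
Proof.
have := bin_fact (leq_addr q i); rewrite addKn => <-.
by rewrite leq_pmull // bin_gt0 leq_addr.
Qed.

Section SeriesBounds.
Variable R : realType.
Implicit Types (u f h : nat -> R).

Lemma series0 u : series u 0 = 0.
Proof. by rewrite /series /= big_geq. Qed.

Lemma seriesB u v N : series u N - series v N = \sum_(0 <= k < N) (u k - v k).
Proof. by rewrite /series /= sumrB. Qed.

Lemma series_le_limn u N : (forall m, 0 <= u m) -> cvgn (series u) ->
  series u N <= limn (series u).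
Proof.
move=> u0 cu; apply: nondecreasing_cvgn_le => //.
by apply: nondecreasing_series => m _ _; exact: u0.
Qed.

Lemma limn_le f X : cvgn f -> (forall N, f N <= X) -> limn f <= X.
Proof. by move=> cf fX; apply: limr_le => //; near=> N; exact: fX. Unshelve. all: end_near. Qed.

Lemma limnB_mulr_le f h K X : cvgn f -> cvgn h ->
  (forall N, (f N - h N) * K <= X) -> (limn f - limn h) * K <= X.
Proof.
move=> cf ch fhX; have cfh : ((fun N => (f N - h N) * K) @ \oo --> (limn f - limn h) * K)%classic.
  by apply: cvgMl; exact: cvgB.
by apply: (cvgr_to_le cfh); near=> N; exact: fhX.
Unshelve. all: end_near. Qed.

Lemma sum_shift_le_limn u k a M : (forall m, 0 <= u m) -> cvgn (series u) ->
  \sum_(a <= q < M) u (k + q)%N <= limn (series u) - series u a.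
Proof.
move=> u0 cu; have [aM|Ma] := leqP a M; last first.
  by rewrite big_geq ?(ltnW Ma) // subr_ge0 series_le_limn.
have -> : \sum_(a <= q < M) u (k + q)%N = series u (M + k)%N - series u (a + k)%N.
  rewrite /series /= (@big_cat_nat _ _ _ (a + k) 0 (M + k)) ?leq_add2r //= addrAC subrr add0r.
  by rewrite big_addn addnK; apply: eq_bigr => q _; rewrite addnC.
apply: lerB; first exact: series_le_limn.
by apply: nondecreasing_series; [move=> m _ _; exact: u0 | exact: leq_addr].
Qed.

End SeriesBounds.

Section RealFacts.
Variable R : realType.

Lemma exprn_expR (x : R) k : 0 < x -> x ^+ k = expR (k%:R * ln x).
Proof. by move=> x0; rewrite expRM_natl lnK. Qed.

Lemma powR_expR (x a : R) : 0 < x -> x `^ a = expR (a * ln x).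
Proof. by move=> x0; rewrite /powR gt_eqF. Qed.

Lemma expR_convex (t x y : R) : 0 <= t -> t <= 1 ->
  expR (t * x + (1 - t) * y) <= t * expR x + (1 - t) * expR y.
Proof. by move=> t0 t1; exact: (convex_expR (Itv01 t0 t1)). Qed.

Lemma powR_mul_powR1B (x t : R) : 0 <= x -> x `^ t * x `^ (1 - t) = x.
Proof.
rewrite le_eqVlt => /predU1P[<-|x0].
  have [->|t0] := eqVneq t 0; last by rewrite powR0 // mul0r.
  by rewrite powRr0 subr0 powRr1 // mul1r.
by rewrite -powRD ?subrKC ?powRr1 ?ltW //; apply/implyP => _; exact: lt0r_neq0.
Qed.

Lemma ler_of_subr_eq (x y D : R) : y - x = D -> 0 <= D -> x <= y.
Proof. by move=> <-; rewrite subr_ge0. Qed.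

Lemma expR_ge1 (x : R) : 0 <= x -> 1 <= expR x.
Proof. by move=> x0; rewrite -expR0 ler_expR. Qed.

Lemma series_exp_coeff_le (x : R) N : 0 <= x -> series (exp_coeff x) N <= expR x.
Proof.
move=> x0; apply: series_le_limn => [m|]; first exact: exp_coeff_ge0.
exact: is_cvg_series_exp_coeff.
Qed.

Lemma sum_exp_coeff1_le (x : R) N : 0 <= x ->
  \sum_(1 <= i < N) exp_coeff x i <= expR x - 1.
Proof.
move=> x0; have := @sum_shift_le_limn _ (exp_coeff x) 0 1 N.
rewrite /series /= big_nat1 /exp_coeff /= expr0 fact0 divr1; apply=> [m|].
  exact: exp_coeff_ge0.
exact: is_cvg_series_exp_coeff.
Qed.

Lemma subrXX_le (x y : R) q : 0 <= x -> x <= y ->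
  y ^+ q.+1 - x ^+ q.+1 <= q.+1%:R * y ^+ q * (y - x).
Proof.
move=> x0 xy; have y0 := le_trans x0 xy.
rewrite subrXX /= mulrC ler_wpM2r ?subr_ge0 //.
apply: le_trans (_ : \sum_(i < q.+1) y ^+ q <= _); last first.
  by rewrite sumr_const card_ord mulr_natl.
apply: ler_sum => i _; have iq : (i <= q)%N by rewrite -ltnS.
rewrite -[in leRHS](subnK iq) exprD ler_wpM2l ?exprn_ge0 //.
by rewrite lerXn2r ?nnegrE.
Qed.

Lemma max_dist_le (u v c : R) : `|Num.max u c - Num.max v c| <= `|u - v|.
Proof.
have uv := ler_norm (u - v); have vu := ler_norm (v - u); rewrite distrC in vu.
rewrite ler_norml; have [uc|cu] := leP u c; have [vc|cv] := leP v c.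
all: rewrite ?(max_r uc) ?(max_r vc) ?(max_l (ltW cu)) ?(max_l (ltW cv)).
all: apply/andP; split; lra.
Qed.

End RealFacts.

Section EuclideanNorm.
Variable R : realType.

Lemma sqr_sum_mul_le n (x y : 'I_n -> R) :
  (\sum_i x i * y i) ^+ 2 <= (\sum_i x i ^+ 2) * (\sum_i y i ^+ 2).
Proof.
set X := \sum_i x i ^+ 2; set Y := \sum_i y i ^+ 2; set Z := \sum_i x i * y i.
have XY : \sum_i \sum_j x i ^+ 2 * y j ^+ 2 = X * Y.
  by rewrite mulr_suml; apply: eq_bigr => i _; rewrite mulr_sumr.
have YX : \sum_i \sum_j x j ^+ 2 * y i ^+ 2 = X * Y by rewrite exchange_big.
have Z2 : \sum_i \sum_j x i * y i * (x j * y j) = Z ^+ 2.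
  by rewrite expr2 mulr_suml; apply: eq_bigr => i _; rewrite mulr_sumr.
have lagrange : \sum_i \sum_j (x i * y j - x j * y i) ^+ 2 =
    \sum_i \sum_j x i ^+ 2 * y j ^+ 2 + \sum_i \sum_j x j ^+ 2 * y i ^+ 2
    - 2 * \sum_i \sum_j x i * y i * (x j * y j).
  rewrite mulr_sumr -big_split -sumrB /=; apply: eq_bigr => i _.
  by rewrite mulr_sumr -big_split -sumrB /=; apply: eq_bigr => j _; ring.
have : 0 <= \sum_i \sum_j (x i * y j - x j * y i) ^+ 2.
  by apply: sumr_ge0 => i _; apply: sumr_ge0 => j _; exact: sqr_ge0.
rewrite lagrange XY YX Z2; lra.
Qed.

Lemma enorm_ge0 n (x : 'rV[R]_n) : 0 <= enorm x.
Proof. exact: sqrtr_ge0. Qed.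

Lemma enormN n (x : 'rV[R]_n) : enorm (- x) = enorm x.
Proof. by rewrite /enorm; congr Num.sqrt; apply: eq_bigr => i _; rewrite !mxE sqrrN. Qed.

Lemma enormD n (x y : 'rV[R]_n) : enorm (x + y) <= enorm x + enorm y.
Proof.
have sqr_sum_ge0 (z : 'rV[R]_n) : 0 <= \sum_i z ord0 i ^+ 2.
  by apply: sumr_ge0 => i _; exact: sqr_ge0.
rewrite /enorm -(@ler_pXn2r _ 2) ?nnegrE ?addr_ge0 ?sqrtr_ge0 // sqrrD !sqr_sqrtr //.
set X := \sum_i x ord0 i ^+ 2; set Y := \sum_i y ord0 i ^+ 2.
set Z := \sum_i x ord0 i * y ord0 i.
have -> : \sum_i (x + y) ord0 i ^+ 2 = X + 2 * Z + Y.
  by rewrite /X /Y /Z mulr_sumr -!big_split /=; apply: eq_bigr => i _; rewrite !mxE; ring.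
rewrite mulr_natl lerD2r lerD2l lerMn2r /=.
have [Z_le0|Z_gt0] := leP Z 0; first by rewrite (le_trans Z_le0) ?mulr_ge0 ?sqrtr_ge0.
rewrite -sqrtrM ?sqr_sum_ge0 // -[Z](ger0_norm (ltW Z_gt0)) -sqrtr_sqr ler_sqrt ?mulr_ge0 ?sqr_sum_ge0 //.
exact: sqr_sum_mul_le.
Qed.

End EuclideanNorm.

Section RadialEstimates.
Variables (R : realType) (nu : R).

Definition radial_estimates (h : R -> R) (a b d : R) : Prop :=
  (h a <= h d * h b) /\
  (Num.min a b <= d -> h a <= h d * expR (b `^ nu)) /\
  (a <= b -> (h b - h a) * b `^ (1 - nu) <= d * h b) /\
  (`|h a - h b| * b `^ (1 - nu) <= d `^ (1 - nu) * h d * h b) /\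
  (Num.min a d <= b ->
     `|h a - h b| * b `^ (1 - nu) <= d `^ (1 - nu) * (expR (d `^ nu) - 1) * h b) /\
  (Num.min a b <= d ->
     let C := if (a <= d) && (d <= b) then 2 `^ (1 - nu) else 1 in
     `|h a - h b| * b `^ (1 - nu) <= C * d `^ (1 - nu) * (h d - 1) * expR (b `^ nu)).

Lemma estimates_A_radial n (h : R -> R) :
  (forall a b d, 0 <= a -> 0 <= b -> 0 <= d -> a <= d + b -> b <= a + d ->
     radial_estimates h a b d) ->
  estimates_A nu (fun xi : 'rV[R]_n => h (enorm xi)).
Proof.
move=> est xi eta; apply: est; rewrite ?enorm_ge0 //.
  by have := enormD (xi - eta) eta; rewrite subrK.
by have := enormD xi (eta - xi); rewrite addrC subrK -opprB enormN.
Qed.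

Lemma radial_estimates_max (h : R -> R) (c a b d : R) :
  1 <= c -> 0 <= d -> 0 <= h b -> 0 <= h d -> (a <= b -> h a <= h b) ->
  radial_estimates h a b d -> radial_estimates (fun r => Num.max (h r) c) a b d.
Proof.
move=> c1 d0 hb0 hd0 h_mono [e9 [e10 [e11 [e12 [e13 e14]]]]].
set H := fun r => Num.max (h r) c.
have h_le r : h r <= H r by rewrite /H le_max lexx.
have c_le r : c <= H r by rewrite /H le_max lexx orbT.
have H_ge0 r : 0 <= H r by rewrite (le_trans ler01) // (le_trans c1).
have H_ge1 r : 1 <= H r := le_trans c1 (c_le r).
have H_dist : `|H a - H b| <= `|h a - h b| by exact: max_dist_le.
split.
  rewrite {1}/H ge_max (le_trans e9 (ler_pM _ _ (h_le d) (h_le b))) //=.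
  exact: le_trans (c_le d) (ler_peMr (H_ge0 d) (H_ge1 b)).
split.
  move=> ab_d; have e1 := expR_ge1 (powR_ge0 b nu).
  rewrite {1}/H ge_max (le_trans (e10 ab_d)) ?ler_wpM2r ?expR_ge0 //=.
  exact: le_trans (c_le d) (ler_peMr (H_ge0 d) e1).
split.
  move=> ab; apply: le_trans (le_trans _ (e11 ab)) (ler_wpM2l d0 (h_le b)).
  rewrite ler_wpM2r ?powR_ge0 // (le_trans (ler_norm _)) // distrC (le_trans H_dist) //.
  by rewrite distrC ger0_norm ?subr_ge0 ?h_mono.
split.
  apply: le_trans (ler_wpM2r (powR_ge0 _ _) H_dist) (le_trans e12 _).
  by apply: ler_pM; rewrite ?mulr_ge0 ?powR_ge0 ?ler_wpM2l ?powR_ge0 ?h_le.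
split.
  move=> ad_b; apply: le_trans (ler_wpM2r (powR_ge0 _ _) H_dist) (le_trans (e13 ad_b) _).
  by rewrite ler_wpM2l ?mulr_ge0 ?powR_ge0 // subr_ge0 expR_ge1 ?powR_ge0.
move=> ab_d /=; apply: le_trans (ler_wpM2r (powR_ge0 _ _) H_dist) (le_trans (e14 ab_d) _).
rewrite ler_wpM2r ?expR_ge0 // ler_wpM2l ?lerD2r ?mulr_ge0 ?powR_ge0 //.
by case: ifP.
Qed.

End RadialEstimates.

Section LogFactorial.
Context {R : realType}.

Definition lnfact (k : nat) : R := ln (k`!)%:R.

Lemma natr_fact_gt0 k : 0 < (k`!)%:R :> R.
Proof. by rewrite ltr0n fact_gt0. Qed.

Lemma natr_factE k : (k`!)%:R = expR (lnfact k).
Proof. by rewrite /lnfact lnK // posrE natr_fact_gt0. Qed.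

Lemma lnfact_ge0 k : 0 <= lnfact k.
Proof. by rewrite /lnfact ln_ge0 // ler1n fact_gt0. Qed.

Lemma lnfact_superadditive i q : 0 <= lnfact (i + q) - lnfact i - lnfact q.
Proof.
rewrite -addrA -opprD subr_ge0 /lnfact -lnM ?posrE ?natr_fact_gt0 //.
by rewrite ler_ln ?posrE ?mulr_gt0 ?natr_fact_gt0 // -natrM ler_nat fact_mul_leq.
Qed.

Lemma binomialE i q : ('C(i + q, i))%:R = expR (lnfact (i + q) - lnfact i - lnfact q) :> R.
Proof.
have := bin_fact (leq_addr q i); rewrite addKn => fact_iq.
by rewrite -addrA -opprD expRD expRN expRD -!natr_factE -fact_iq !natrM mulfK.
Qed.

End LogFactorial.

Section Ftil.
Variables (R : realType) (nu : R).
Hypotheses (nu0 : 0 < nu) (nu1 : nu <= 1).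
Local Notation g := (ftil nu).

Lemma nu_neq0 : nu != 0. Proof. exact: lt0r_neq0. Qed.

Lemma one_minus_nu_ge0 : 0 <= 1 - nu. Proof. by rewrite subr_ge0. Qed.

Definition ftil_coef (j : nat) : R := (j`!)%:R `^ (- (1 / nu)).
Definition ftil_term (r : R) (j : nat) : R := ftil_coef j * r ^+ j.

Lemma ftil_coefE j : ftil_coef j = expR (- (1 / nu) * lnfact j).
Proof. by rewrite /ftil_coef powR_expR ?natr_fact_gt0. Qed.

Lemma ftil_termE r j : 0 < r -> ftil_term r j = expR (- (1 / nu) * lnfact j + j%:R * ln r).
Proof. by move=> r0; rewrite /ftil_term ftil_coefE exprn_expR // -expRD. Qed.

Lemma ftil_coef_le_invfact j : ftil_coef j <= (j`!)%:R^-1.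
Proof.
rewrite ftil_coefE natr_factE -expRN ler_expR mulNr lerN2.
by rewrite ler_peMl ?lnfact_ge0 // div1r invf_ge1.
Qed.

Lemma ftil_term0 r : ftil_term r 0 = 1.
Proof. by rewrite /ftil_term /ftil_coef fact0 powR1 mulr1. Qed.

Lemma ftil_term1 r : ftil_term r 1 = r.
Proof. by rewrite /ftil_term /ftil_coef powR1 mul1r. Qed.

Lemma ftil_term_ge0 r j : 0 <= r -> 0 <= ftil_term r j.
Proof. by move=> r0; rewrite mulr_ge0 ?exprn_ge0 ?powR_ge0. Qed.

Lemma cvg_series_ftil_term r : 0 <= r -> cvgn (series (ftil_term r)).
Proof.
move=> r0; apply: (@series_le_cvg _ _ (exp_coeff r)) => [j|j|j|].
- exact: ftil_term_ge0.
- by rewrite /exp_coeff /= divr_ge0 ?exprn_ge0.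
- by rewrite /ftil_term /exp_coeff /= mulrC ler_wpM2l ?exprn_ge0 ?ftil_coef_le_invfact.
exact: is_cvg_series_exp_coeff.
Qed.

Lemma series_ftil_term_le r N : 0 <= r -> series (ftil_term r) N <= g r.
Proof.
by move=> r0; apply: series_le_limn; [move=> m; exact: ftil_term_ge0 | exact: cvg_series_ftil_term].
Qed.

Lemma ftil_le r X : 0 <= r -> (forall N, series (ftil_term r) N <= X) -> g r <= X.
Proof. by move=> r0; apply: limn_le; exact: cvg_series_ftil_term. Qed.

Lemma ftilB_mulr_le r s K X : 0 <= r -> 0 <= s ->
  (forall N, (series (ftil_term r) N - series (ftil_term s) N) * K <= X) ->
  (g r - g s) * K <= X.
Proof. by move=> r0 s0; apply: limnB_mulr_le; exact: cvg_series_ftil_term. Qed.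

Lemma ftil_ge1D r : 0 <= r -> 1 + r <= g r.
Proof.
move=> r0; apply: le_trans (series_ftil_term_le 2 r0).
by rewrite /series /= big_nat_recr //= big_nat1 ftil_term0 ftil_term1.
Qed.

Lemma ftil_ge1 r : 0 <= r -> 1 <= g r.
Proof. by move=> r0; apply: le_trans (ftil_ge1D r0); rewrite lerDl. Qed.

Lemma ftil_ge0 r : 0 <= r -> 0 <= g r.
Proof. by move=> r0; apply: le_trans (ftil_ge1 r0). Qed.

Lemma ftil0 : g 0 = 1.
Proof.
apply/eqP; rewrite eq_le ftil_ge1 // andbT; apply: ftil_le => // -[|N].
  by rewrite series0.
rewrite /series /= big_ltn // ftil_term0 big_nat_cond big1 ?addr0 // => j /andP[/andP[j1 _] _].
by rewrite /ftil_term expr0n gtn_eqF // mulr0.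
Qed.

Lemma ftil_mono r s : 0 <= r -> r <= s -> g r <= g s.
Proof.
move=> r0 rs; have s0 := le_trans r0 rs; apply: ftil_le => // N.
apply: le_trans (series_ftil_term_le N s0); apply: ler_sum => j _.
by rewrite ler_wpM2l ?powR_ge0 // lerXn2r ?nnegrE.
Qed.

Lemma sum_ftil_term_shift r k a M : 0 <= r ->
  \sum_(a <= q < M) ftil_term r (k + q) <= g r - series (ftil_term r) a.
Proof.
by move=> r0; apply: sum_shift_le_limn; [move=> m; exact: ftil_term_ge0 | exact: cvg_series_ftil_term].
Qed.

Definition ftil_mix r i q := nu * ftil_term r q + (1 - nu) * ftil_term r (i + q).

Lemma sum_ftil_mix r i a M : 0 <= r ->
  \sum_(a <= q < M) ftil_mix r i q <= g r - series (ftil_term r) a.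
Proof.
move=> r0; rewrite big_split /= -!mulr_sumr.
have := lerD (ler_wpM2l (ltW nu0) (sum_ftil_term_shift 0 a M r0))
             (ler_wpM2l one_minus_nu_ge0 (sum_ftil_term_shift i a M r0)).
by rewrite -mulrDl subrKC mul1r.
Qed.

Definition binom_term (r s : R) (i q : nat) : R :=
  ftil_coef (i + q) * (r ^+ q * s ^+ i *+ 'C(i + q, i)).

Lemma series_ftil_termD r s N : series (ftil_term (r + s)) N =
  \sum_(0 <= i < N) \sum_(0 <= q < N - i) binom_term r s i q.
Proof.
rewrite /series /= -sum_triangle; apply: eq_bigr => j _.
rewrite /ftil_term exprDn big_mkord mulr_sumr; apply: eq_bigr => i _.
by rewrite /binom_term subnKC // -ltnS.
Qed.

Lemma binom_term0q r s q : binom_term r s 0 q = ftil_term r q.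
Proof. by rewrite /binom_term add0n bin0 mulr1n expr0 mulr1. Qed.

Lemma binom_termi0 r s i : binom_term r s i 0 = ftil_term s i.
Proof. by rewrite /binom_term addn0 binn mulr1n expr0 mul1r. Qed.

Lemma binom_termE r s i q : 0 < r -> 0 < s -> binom_term r s i q =
  expR (- (1 / nu) * lnfact (i + q) + (lnfact (i + q) - lnfact i - lnfact q)
        + q%:R * ln r + i%:R * ln s).
Proof.
move=> r0 s0; rewrite /binom_term -mulr_natr binomialE ftil_coefE !exprn_expR //.
by rewrite -!expRD; congr expR; ring.
Qed.

Lemma binom_term_le_mul r s i q : 0 < r -> 0 < s ->
  binom_term r s i q <= ftil_term s i * ftil_term r q.
Proof.
move=> r0 s0; rewrite binom_termE // !ftil_termE // -expRD ler_expR.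
apply: (@ler_of_subr_eq _ _ _ ((1 / nu - 1) * (lnfact (i + q) - lnfact i - lnfact q))).
  by ring.
by rewrite mulr_ge0 ?lnfact_superadditive // subr_ge0 div1r invf_ge1.
Qed.

Lemma powR_binom_term_le_mix r s i q k : (k <= i)%N -> 0 < s -> s <= r ->
  (r `^ (1 - nu)) ^+ k * binom_term r s i q <=
  (s `^ (1 - nu)) ^+ k * (exp_coeff (s `^ nu) i * ftil_mix r i q).
Proof.
move=> ki s0 sr; have r0 := lt_le_trans s0 sr.
rewrite /exp_coeff /= /ftil_mix !ftil_termE //.
apply: le_trans (ler_wpM2l (exprn_ge0 _ (powR_ge0 _ _))
  (ler_wpM2l (divr_ge0 (exprn_ge0 _ (powR_ge0 _ _)) (ler0n _ _))
    (expR_convex _ _ (ltW nu0) nu1))).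
rewrite binom_termE // !powR_expR // -!expRM_natl (natr_factE i) -expRN -!expRD ler_expR.
apply: (@ler_of_subr_eq _ _ _ ((i%:R - k%:R) * (1 - nu) * (ln r - ln s))).
  by rewrite natrD; field; exact: nu_neq0.
rewrite mulr_ge0 ?mulr_ge0 ?one_minus_nu_ge0 // subr_ge0 ?ler_nat //.
by rewrite ler_ln ?posrE.
Qed.

Lemma binom_term_le_mix r s i q : 0 < s -> s <= r ->
  binom_term r s i q <= exp_coeff (s `^ nu) i * ftil_mix r i q.
Proof. by move=> s0 sr; have := powR_binom_term_le_mix q (leq0n i) s0 sr; rewrite !expr0 !mul1r. Qed.

Lemma binom_termS_le_mix r s i q : 0 < s -> s <= r ->
  r `^ (1 - nu) * binom_term r s i.+1 q <=
  s `^ (1 - nu) * (exp_coeff (s `^ nu) i.+1 * ftil_mix r i.+1 q).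
Proof. by move=> s0 sr; have := powR_binom_term_le_mix q (ltn0Sn i) s0 sr; rewrite !expr1. Qed.

Lemma binom_termS_le_mul r s i q : 0 < r -> 0 < s ->
  r `^ (1 - nu) * binom_term r s i.+1 q <= s `^ (1 - nu) *
    (nu * (ftil_term s i.+1 * ftil_term r q) + (1 - nu) * (ftil_term s i * ftil_term r q.+1)).
Proof.
move=> r0 s0; rewrite !ftil_termE // -!expRD.
apply: le_trans (ler_wpM2l (powR_ge0 _ _) (expR_convex _ _ (ltW nu0) nu1)).
rewrite binom_termE // !powR_expR // -!expRD ler_expR addSnnS.
apply: (@ler_of_subr_eq _ _ _ ((1 - nu) / nu * (lnfact (i + q.+1) - lnfact i - lnfact q.+1))).
  by rewrite !mulrS; field; exact: nu_neq0.
by rewrite mulr_ge0 ?lnfact_superadditive ?divr_ge0 ?one_minus_nu_ge0 // ltW.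
Qed.

Lemma ftil_term_deriv_le b q : 0 < b ->
  b `^ (1 - nu) * (ftil_coef q.+1 * (q.+1)%:R * b ^+ q) <= ftil_mix b 1 q.
Proof.
move=> b0; have lnfactS : lnfact q.+1 = ln (q.+1)%:R + lnfact q :> R.
  by rewrite /lnfact factS natrM lnM ?posrE ?ltr0n ?fact_gt0.
rewrite -[in X in _ * (_ * X * _)](@lnK _ (q.+1)%:R) ?posrE ?ltr0n //.
rewrite /ftil_mix add1n !ftil_termE //; apply: le_trans (expR_convex _ _ (ltW nu0) nu1).
rewrite ftil_coefE exprn_expR // powR_expR // -!expRD ler_expR lnfactS.
by apply: (@ler_of_subr_eq _ _ _ 0) => //; rewrite mulrS; field; exact: nu_neq0.
Qed.

Lemma series_ftil_term1 r : series (ftil_term r) 1 = 1.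
Proof. by rewrite /series /= big_nat1 ftil_term0. Qed.

Lemma series_ftil_termDB r s N :
  series (ftil_term (r + s)) N.+1 - series (ftil_term r) N.+1 =
  \sum_(0 <= i < N) \sum_(0 <= q < N - i) binom_term r s i.+1 q.
Proof.
rewrite series_ftil_termD big_ltn // subn0 big_add1 /=.
have -> : series (ftil_term r) N.+1 = \sum_(0 <= q < N.+1) binom_term r s 0 q.
  by apply: eq_bigr => q _; rewrite binom_term0q.
by rewrite addrC addKr.
Qed.

Lemma ftilD_le_mul r s : 0 <= r -> 0 <= s -> g (r + s) <= g r * g s.
Proof.
rewrite le_eqVlt => /predU1P[<- _|r0]; first by rewrite add0r ftil0 mul1r.
rewrite le_eqVlt => /predU1P[<-|s0]; first by rewrite addr0 ftil0 mulr1.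
have [r_ge0 s_ge0] := (ltW r0, ltW s0).
apply: ftil_le => [|N]; first exact: addr_ge0.
rewrite series_ftil_termD.
apply: (@le_trans _ _ (\sum_(0 <= i < N) ftil_term s i * g r)).
  apply: ler_sum => i _.
  apply: le_trans (ler_sum _ (fun q _ => binom_term_le_mul i q r0 s0)) _.
  rewrite -mulr_sumr ler_wpM2l ?ftil_term_ge0 //.
  exact: series_ftil_term_le _ r_ge0.
rewrite -mulr_suml mulrC ler_wpM2l ?ftil_ge0 //.
exact: series_ftil_term_le _ s_ge0.
Qed.

Lemma ftilD_le_expR r s : 0 <= s -> s <= r -> g (r + s) <= g r * expR (s `^ nu).
Proof.
rewrite le_eqVlt => /predU1P[<- _|s0 sr].
  by rewrite addr0 powR0 ?nu_neq0 // expR0 mulr1.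
have r0 := lt_le_trans s0 sr.
have [r_ge0 s_ge0] := (ltW r0, ltW s0).
apply: ftil_le => [|N]; first exact: addr_ge0.
rewrite series_ftil_termD.
apply: (@le_trans _ _ (\sum_(0 <= i < N) exp_coeff (s `^ nu) i * g r)).
  apply: ler_sum => i _.
  apply: le_trans (ler_sum _ (fun q _ => binom_term_le_mix i q s0 sr)) _.
  rewrite -mulr_sumr ler_wpM2l ?exp_coeff_ge0 ?powR_ge0 //.
  by have := sum_ftil_mix i 0 (N - i) r_ge0; rewrite series0 subr0.
rewrite -mulr_suml mulrC ler_wpM2l ?ftil_ge0 //.
exact: series_exp_coeff_le _ (powR_ge0 _ _).
Qed.

Lemma ftilD_subs_le_expR r s : 0 <= s -> s <= r ->
  g (r + s) - g s <= (g r - 1) * expR (s `^ nu).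
Proof.
rewrite le_eqVlt => /predU1P[<- _|s0 sr].
  by rewrite addr0 ftil0 powR0 ?nu_neq0 // expR0 mulr1.
have r0 := lt_le_trans s0 sr.
have [r_ge0 s_ge0] := (ltW r0, ltW s0).
rewrite -[X in X <= _]mulr1; apply: ftilB_mulr_le => [||N]; rewrite ?addr_ge0 //.
rewrite mulr1 series_ftil_termD.
have -> : series (ftil_term s) N = \sum_(0 <= i < N) binom_term r s i 0.
  by apply: eq_bigr => i _; rewrite binom_termi0.
rewrite -sumrB.
apply: (@le_trans _ _ (\sum_(0 <= i < N) exp_coeff (s `^ nu) i * (g r - 1))).
  rewrite big_nat_cond [leRHS]big_nat_cond; apply: ler_sum => i /andP[/andP[_ iN] _].
  rewrite big_ltn ?subn_gt0 // addrC addKr.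
  apply: le_trans (ler_sum _ (fun q _ => binom_term_le_mix i q s0 sr)) _.
  rewrite -mulr_sumr ler_wpM2l ?exp_coeff_ge0 ?powR_ge0 //.
  by have := sum_ftil_mix i 1 (N - i) r_ge0; rewrite series_ftil_term1.
rewrite -mulr_suml mulrC ler_wpM2l ?subr_ge0 ?ftil_ge1 //.
exact: series_exp_coeff_le _ (powR_ge0 _ _).
Qed.

Lemma ftil_sub_le a b : 0 <= a -> a <= b ->
  (g b - g a) * b `^ (1 - nu) <= (b - a) * g b.
Proof.
move=> a0 ab; have [b0|b0] := eqVneq b 0.
  have a_eq0 : a = 0 by lra.
  by rewrite a_eq0 b0 !subrr !mul0r.
have b_ge0 := le_trans a0 ab.
have {b0}b0 : 0 < b by rewrite lt0r b0.
apply: ftilB_mulr_le => // -[|N].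
  by rewrite !series0 subrr mul0r mulr_ge0 ?ftil_ge0 ?subr_ge0.
rewrite seriesB mulr_suml big_ltn // !ftil_term0 subrr mul0r add0r big_add1 /=.
apply: (@le_trans _ _ (\sum_(0 <= q < N) (b - a) * ftil_mix b 1 q)).
  apply: ler_sum => q _.
  apply: le_trans (ler_wpM2l _ (ftil_term_deriv_le q b0)); last by rewrite subr_ge0.
  have -> : (ftil_term b q.+1 - ftil_term a q.+1) * b `^ (1 - nu) =
    ftil_coef q.+1 * (b ^+ q.+1 - a ^+ q.+1) * b `^ (1 - nu) by rewrite /ftil_term -mulrBr.
  have -> : (b - a) * (b `^ (1 - nu) * (ftil_coef q.+1 * q.+1%:R * b ^+ q)) =
    ftil_coef q.+1 * (q.+1%:R * b ^+ q * (b - a)) * b `^ (1 - nu) by ring.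
  by rewrite ler_wpM2r ?powR_ge0 // ler_wpM2l ?powR_ge0 // subrXX_le.
rewrite -mulr_sumr ler_wpM2l ?subr_ge0 //.
by have := sum_ftil_mix 1 0 N b_ge0; rewrite series0 subr0.
Qed.

Lemma ftilD_subr_le_mul r s : 0 <= r -> 0 <= s ->
  (g (r + s) - g r) * r `^ (1 - nu) <= s `^ (1 - nu) * g s * g r.
Proof.
rewrite le_eqVlt => /predU1P[<- s0|r0].
  rewrite add0r ftil0 mulr1 mulrC; apply: ler_pM; rewrite ?subr_ge0 ?ftil_ge1 ?powR_ge0 //.
    by apply: ge0_ler_powR; rewrite ?one_minus_nu_ge0 ?nnegrE.
  by rewrite gerBl.
have r_ge0 := ltW r0.
rewrite le_eqVlt => /predU1P[<-|s0].
  by rewrite addr0 subrr mul0r !mulr_ge0 ?powR_ge0 ?ftil_ge0.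
have s_ge0 := ltW s0.
apply: ftilB_mulr_le => [||[|N]]; rewrite ?addr_ge0 //.
  by rewrite !series0 subrr mul0r !mulr_ge0 ?powR_ge0 ?ftil_ge0.
rewrite series_ftil_termDB mulr_suml.
apply: (@le_trans _ _ (\sum_(0 <= i < N)
   s `^ (1 - nu) * ((nu * ftil_term s i.+1 + (1 - nu) * ftil_term s i) * g r))).
  apply: ler_sum => i _; rewrite mulr_suml.
  under eq_bigr do rewrite mulrC.
  apply: le_trans (ler_sum _ (fun q _ => binom_termS_le_mul i q r0 s0)) _.
  rewrite -mulr_sumr ler_wpM2l ?powR_ge0 // big_split /= mulrDl.
  apply: lerD; rewrite -mulr_sumr -mulrA ler_wpM2l ?(ltW nu0) ?one_minus_nu_ge0 //.
    rewrite -mulr_sumr ler_wpM2l ?ftil_term_ge0 //.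
    exact: series_ftil_term_le _ r_ge0.
  rewrite -mulr_sumr ler_wpM2l ?ftil_term_ge0 //.
  by have := sum_ftil_term_shift 1 0 (N - i) r_ge0; rewrite series0 subr0.
rewrite -mulr_sumr -mulr_suml -mulrA ler_wpM2l ?powR_ge0 //.
rewrite ler_wpM2r ?ftil_ge0 // big_split /= -!mulr_sumr.
have := lerD (ler_wpM2l (ltW nu0) (sum_ftil_term_shift 1 0 N s_ge0))
             (ler_wpM2l one_minus_nu_ge0 (series_ftil_term_le N s_ge0)).
by rewrite series0 subr0 -mulrDl subrKC mul1r.
Qed.

Lemma ftilD_subr_le_expR r s : 0 <= s -> s <= r ->
  (g (r + s) - g r) * r `^ (1 - nu) <= s `^ (1 - nu) * (expR (s `^ nu) - 1) * g r.
Proof.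
rewrite le_eqVlt => /predU1P[<- r0|s0 sr].
  by rewrite addr0 subrr mul0r !mulr_ge0 ?powR_ge0 ?ftil_ge0 // subr_ge0 expR_ge1 ?powR_ge0.
have r0 := lt_le_trans s0 sr.
have [r_ge0 s_ge0] := (ltW r0, ltW s0).
have expR1_ge0 : 0 <= expR (s `^ nu) - 1 by rewrite subr_ge0 expR_ge1 ?powR_ge0.
apply: ftilB_mulr_le => [||[|N]]; rewrite ?addr_ge0 //.
  by rewrite !series0 subrr mul0r !mulr_ge0 ?powR_ge0 ?ftil_ge0.
rewrite series_ftil_termDB mulr_suml.
apply: (@le_trans _ _ (\sum_(0 <= i < N)
   s `^ (1 - nu) * (exp_coeff (s `^ nu) i.+1 * g r))).
  apply: ler_sum => i _; rewrite mulr_suml.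
  under eq_bigr do rewrite mulrC.
  apply: le_trans (ler_sum _ (fun q _ => binom_termS_le_mix i q s0 sr)) _.
  rewrite -mulr_sumr ler_wpM2l ?powR_ge0 // -mulr_sumr ler_wpM2l ?exp_coeff_ge0 ?powR_ge0 //.
  by have := sum_ftil_mix i.+1 0 (N - i) r_ge0; rewrite series0 subr0.
rewrite -mulr_sumr -mulr_suml -mulrA ler_wpM2l ?powR_ge0 //.
rewrite ler_wpM2r ?ftil_ge0 //.
by have := sum_exp_coeff1_le N.+1 (powR_ge0 s nu); rewrite big_add1.
Qed.

Lemma powR_le1D d : 0 <= d -> d `^ nu <= 1 + d.
Proof.
move=> d0; have [d1|d1] := leP d 1.
  by apply: le_trans (ge0_ler_powR (ltW nu0) _ _ d1) _; rewrite ?nnegrE // powR1 lerDl.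
by apply: le_trans (ler1_powR (ltW d1) nu1) _; rewrite lerDr.
Qed.

Lemma le_powR_mul_ftil d : 0 <= d -> d <= d `^ (1 - nu) * g d.
Proof.
move=> d0; rewrite -{1}(powR_mul_powR1B nu d0) mulrC ler_wpM2l ?powR_ge0 //.
exact: le_trans (powR_le1D d0) (ftil_ge1D d0).
Qed.

Lemma le_powR_mul_expR d : 0 <= d -> d <= d `^ (1 - nu) * (expR (d `^ nu) - 1).
Proof.
move=> d0; rewrite -{1}(powR_mul_powR1B nu d0) mulrC ler_wpM2l ?powR_ge0 //.
by rewrite lerBrDl expR_ge1Dx.
Qed.

Section Triangle.
Variables a b d : R.
Hypotheses (a0 : 0 <= a) (b0 : 0 <= b) (d0 : 0 <= d).
Hypotheses (adb : a <= d + b) (bad : b <= a + d).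

Lemma ftil_tri_mul : g a <= g d * g b.
Proof. exact: le_trans (ftil_mono a0 adb) (ftilD_le_mul d0 b0). Qed.

Lemma ftil_tri_expR : Num.min a b <= d -> g a <= g d * expR (b `^ nu).
Proof.
have [ad _|da] := leP a d.
  exact: le_trans (ftil_mono a0 ad) (ler_peMr (ftil_ge0 d0) (expR_ge1 (powR_ge0 _ _))).
rewrite ge_min leNgt da => bd.
exact: le_trans (ftil_mono a0 adb) (ftilD_le_expR b0 bd).
Qed.

Lemma ftil_tri_sub : a <= b -> (g b - g a) * b `^ (1 - nu) <= d * g b.
Proof.
move=> ab; apply: le_trans (ftil_sub_le a0 ab) _.
by rewrite ler_wpM2r ?ftil_ge0 // lerBlDl.
Qed.

Lemma ftil_tri_dist_mul : `|g a - g b| * b `^ (1 - nu) <= d `^ (1 - nu) * g d * g b.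
Proof.
have [ab|ba] := leP a b.
  rewrite distrC ger0_norm ?subr_ge0 ?ftil_mono //.
  by apply: le_trans (ftil_tri_sub ab) _; rewrite ler_wpM2r ?ftil_ge0 // le_powR_mul_ftil.
rewrite ger0_norm ?subr_ge0 ?ftil_mono ?(ltW ba) //.
apply: le_trans (ftilD_subr_le_mul b0 d0).
by rewrite ler_wpM2r ?powR_ge0 // lerD2r ftil_mono // addrC.
Qed.

Lemma ftil_tri_dist_expR : Num.min a d <= b ->
  `|g a - g b| * b `^ (1 - nu) <= d `^ (1 - nu) * (expR (d `^ nu) - 1) * g b.
Proof.
have [ab _|ba] := leP a b.
  rewrite distrC ger0_norm ?subr_ge0 ?ftil_mono //.
  by apply: le_trans (ftil_tri_sub ab) _; rewrite ler_wpM2r ?ftil_ge0 // le_powR_mul_expR.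
rewrite ge_min leNgt ba => db.
rewrite ger0_norm ?subr_ge0 ?ftil_mono ?(ltW ba) //.
apply: le_trans (ftilD_subr_le_expR d0 db).
by rewrite ler_wpM2r ?powR_ge0 // lerD2r ftil_mono // addrC.
Qed.

Lemma ftil_dist_le_expR : Num.min a b <= d -> `|g a - g b| <= (g d - 1) * expR (b `^ nu).
Proof.
have gd1 : 0 <= g d - 1 by rewrite subr_ge0 ftil_ge1.
have [bd _|db] := leP b d.
  have [ab|ba] := leP a b.
    rewrite distrC ger0_norm ?subr_ge0 ?ftil_mono //.
    apply: le_trans (ler_peMr gd1 (expR_ge1 (powR_ge0 _ _))).
    by rewrite lerB ?ftil_mono ?ftil_ge1.
  rewrite ger0_norm ?subr_ge0 ?ftil_mono ?(ltW ba) //.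
  apply: le_trans (ftilD_subs_le_expR b0 bd).
  by rewrite lerD2r ftil_mono.
rewrite ge_min (leNgt b d) db orbF => ad.
have sa : b - d <= a by rewrite lerBlDr.
have sd : b - d <= d := le_trans sa ad.
have s0 : 0 <= b - d by rewrite subr_ge0 ltW.
rewrite distrC ger0_norm ?subr_ge0 ?ftil_mono ?(le_trans ad (ltW db)) //.
apply: le_trans (le_trans _ (ftilD_subs_le_expR s0 sd)) _.
  by rewrite subrKC lerD2l lerN2 ftil_mono.
rewrite ler_wpM2l // ler_expR ge0_ler_powR ?nnegrE ?(ltW nu0) //; lra.
Qed.

Lemma powR_le_weight : Num.min a b <= d ->
  b `^ (1 - nu) <= (if (a <= d) && (d <= b) then 2 `^ (1 - nu) else 1) * d `^ (1 - nu).
Proof.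
have [bd _|db] := leP b d.
  apply: le_trans (ge0_ler_powR one_minus_nu_ge0 _ _ bd) _; rewrite ?nnegrE //.
  apply: ler_peMl; rewrite ?powR_ge0 //; case: ifP => // _.
  by rewrite -[X in X <= _](powRr0 2); apply: ler_powR; rewrite ?ler1n ?one_minus_nu_ge0.
rewrite ge_min (leNgt b d) db orbF => ad; rewrite ad (ltW db) /=.
rewrite -powRM ?ler0n // ge0_ler_powR ?one_minus_nu_ge0 ?nnegrE ?mulr_ge0 //.
by apply: le_trans bad _; rewrite mulr_natl mulr2n lerD2r.
Qed.

Lemma radial_estimates_ftil : radial_estimates nu g a b d.
Proof.
split; first exact: ftil_tri_mul.
split; first exact: ftil_tri_expR.
split; first exact: ftil_tri_sub.
split; first exact: ftil_tri_dist_mul.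
split; first exact: ftil_tri_dist_expR.
move=> ab_d /=.
apply: le_trans (ler_pM (normr_ge0 _) (powR_ge0 _ _) (ftil_dist_le_expR ab_d)
  (powR_le_weight ab_d)) _.
by rewrite mulrC !mulrA.
Qed.

End Triangle.

End Ftil.

Theorem lemmaA2 (R : realType) (n : nat) (nu : R) (hnu0 : 0 < nu) (hnu1 : nu <= 1) :
  estimates_A nu (@ftilde R n nu) /\
  estimates_A nu (fun xi : 'rV[R]_n => Num.max (ftilde nu xi) (ftil nu 1)).
Proof.
split.
  apply: (estimates_A_radial (h := ftil nu)) => a b d *.
  exact: radial_estimates_ftil.
apply: (estimates_A_radial (h := fun r => Num.max (ftil nu r) (ftil nu 1))).
move=> a b d a0 b0 d0 adb bad.
apply: radial_estimates_max; rewrite ?ftil_ge0 ?ftil_ge1 //; last exact: radial_estimates_ftil.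
exact: ftil_mono.
Qed.
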